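(* Let $(\mathcal R,\tau)$ be a t-minimal Hausdorff geometric structure and $\mathcal S$ a lore of $(\mathcal R,\tau)$. Let $X$ be definable over $A$ and let $x\in X$ be generic over $A$. Then $x\in X^{lman}$.
   Context: A structure $\mathcal R$ is geometric if $\operatorname{acl}$ satisfies exchange and $\mathcal R$ eliminates $\exists^\infty$; $\dim$ denotes acl-dimension, and $a\in X$ is generic over $A$ if $\dim(a/A)=\dim(X)$. ''Definable'' allows parameters. Given a topology $\tau$ on $R$ (extended to definable subsets of $R^n$ by product and subspace topologies), $(\mathcal R,\tau)$ is a Hausdorff geometric structure if: (1) $\tau$ is Hausdorff; (2) $\mathcal R$ is geometric and $\aleph_1$-saturated; (3) if $X\subset R^n$ is $A$-definable and $a\in\overline{\overline X-X}$ then $\dim(a/A)<\dim(X)$; (4) if $X$ is definable over a countable $A$, $a\in X$ generic over $A$, and $B\supseteq A$ countable, every neighborhood of $a$ contains a generic of $X$ over $B$; (5) if $X,Y$, $Z\subset X\times Y$ are $A$-definable of the same dimension with both projections of $Z$ finite-to-one and $(x,y)\in Z$ generic over $A$, then $Z$ restricted to some $U\times V$ ($U\ni x$, $V\ni y$ open) is the graph of a homeomorphism $U\to V$. It is t-minimal if moreover $\tau$ has a basis given by the instances of a parameter-free formula, and $R$ has no isolated points. A lore is a collection $\mathcal S$ of definable sets (''loric sets'') such that: (i) $R$ and the diagonal of $R^2$ are loric, and loric sets are closed under finite products, finite intersections, coordinate permutations; (ii) if $f:X\to Y$ is a definable homeomorphism with $X$ and the graph of $f$ loric, then $Y$ is loric;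 (iii) definable open subsets of loric sets are loric, and a definable set with an open cover by loric sets is loric; (iv) every nonempty $A$-definable $X$ has a relatively open $A$-definable loric subset $X'$ with $\dim(X-X')<\dim(X)$. A loric map is a continuous function with loric graph; a loric homeomorphism is a loric map that is a homeomorphism. For a definable $X$ with $\dim(X)=n$, a point $x\in X$ is a loric manifold point if there is a definable relatively open $U$ with $x\in U\subset X$ that is lorically homeomorphic to an open subset of $R^n$; $X^{lman}$ is the set of loric manifold points of $X$. *)

From HB Require Import structures.
From mathcomp Require Import all_boot all_order fingroup perm.
From mathcomp Require Import boolp classical_sets cardinality topology function_spaces.
Import ArrowAsProduct.

Set Implicit Arguments.
Unset Strict Implicit.
Unset Printing Implicit Defensive.

Local Open Scope classical_set_scope.

Record fo_structure (R : Type) := FOStructure {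
  fo_sym : Type;
  fo_ar : fo_sym -> nat;
  fo_int : forall s : fo_sym, set ('I_(fo_ar s) -> R) }.

Inductive formula (sym : Type) (ar : sym -> nat) : Type :=
| FRel (s : sym) (v : 'I_(ar s) -> nat)
| FEq (i j : nat)
| FNot (phi : formula ar)
| FAnd (phi psi : formula ar)
| FEx (i : nat) (phi : formula ar).

Definition upd (R : Type) (e : nat -> R) (i : nat) (r : R) : nat -> R :=
  fun j => if j == i then r else e j.

Fixpoint sat (R : Type) (M : fo_structure R) (e : nat -> R)
  (phi : formula (@fo_ar R M)) {struct phi} : Prop :=
  match phi with
  | FRel s v => @fo_int R M s (fun k => e (v k))
  | FEq i j => e i = e j
  | FNot p => ~ @sat R M e p
  | FAnd p q => @sat R M e p /\ @sat R M e q
  | FEx i p => exists r, @sat R M (upd e i r) p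
  end.
Arguments sat {R} M e phi.

(* 0..n-1 are the coordinates, n..n+m-1 the parameters.                *)
Definition definable (R : Type) (M : fo_structure R) (A : set R) (n : nat)
  (X : set ('I_n -> R)) : Prop :=
  exists (phi : formula (@fo_ar R M)) (m : nat) (p : 'I_m -> R),
    (forall j, A (p j)) /\
    X = [set x | forall e : nat -> R,
                   (forall i : 'I_n, e i = x i) ->
                   (forall j : 'I_m, e (n + j)%N = p j) -> sat M e phi].

Definition catt (R : Type) (n m : nat) (x : 'I_n -> R) (y : 'I_m -> R)
  : 'I_(n + m) -> R :=
  fun i => match split i with inl j => x j | inr k => y k end.

Definition prodS (R : Type) (n m : nat) (X : set ('I_n -> R))
  (Y : set ('I_m -> R)) : set ('I_(n + m) -> R) :=
  [set z | exists a b, X a /\ Y b /\ z = catt a b].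

Definition graph (R : Type) (n m : nat) (X : set ('I_n -> R))
  (f : ('I_n -> R) -> ('I_m -> R)) : set ('I_(n + m) -> R) :=
  [set z | exists a, X a /\ z = catt a (f a)].

Definition pt1 (R : Type) (r : R) : 'I_1 -> R := fun _ => r.

Definition acl (R : Type) (M : fo_structure R) (A : set R) (b : R) : Prop :=
  exists Y : set ('I_1 -> R), definable M A Y /\ finite_set Y /\ Y (pt1 b).

Definition acl_indep (R : Type) (M : fo_structure R) (A : set R) (n : nat)
  (a : 'I_n -> R) (J : {set 'I_n}) : Prop :=
  forall i, i \in J -> ~ acl M (A `|` [set a j | j in [set j | j \in J :\ i]]) (a i).

Definition dimt (R : Type) (M : fo_structure R) (A : set R) (n : nat)
  (a : 'I_n -> R) : nat :=
  \max_(J : {set 'I_n} | `[< acl_indep M A a J >]) #|J|.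

(* dim(X): the maximum of dim(a/B) for a in X, B a (small=countable)   *)
(* parameter set over which X is definable (in an aleph_1-saturated    *)
(* structure this does not depend on B).  dimS set0 = 0 is only a      *)
(* convention; where the empty set matters it is treated separately.  *)
Definition dimS (R : Type) (M : fo_structure R) (n : nat)
  (X : set ('I_n -> R)) : nat :=
  \max_(k < n.+1 | `[< exists B : set R, countable B /\ definable M B X /\
                        exists a, X a /\ dimt M B a = k >]) k.

Definition generic (R : Type) (M : fo_structure R) (A : set R) (n : nat)
  (X : set ('I_n -> R)) (a : 'I_n -> R) : Prop :=
  X a /\ dimt M A a = dimS M X.

Definition acl_exchange (R : Type) (M : fo_structure R) : Prop :=
  forall (A : set R) (a b : R),
    acl M (A `|` [set a]) b -> ~ acl M A b -> acl M (A `|` [set b]) a.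

Definition elim_exists_infty (R : Type) (M : fo_structure R) : Prop :=
  forall (m : nat) (Y : set ('I_(1 + m) -> R)), definable M setT Y ->
    exists N : nat, forall b : 'I_m -> R,
      finite_set [set r | Y (catt (pt1 r) b)] ->
      exists f : 'I_N -> R, [set r | Y (catt (pt1 r) b)] `<=` range f.

Definition geometric (R : Type) (M : fo_structure R) : Prop :=
  acl_exchange M /\ elim_exists_infty M.

Definition aleph1_saturated (R : Type) (M : fo_structure R) : Prop :=
  forall F : nat -> set ('I_1 -> R),
    (forall k, definable M setT (F k)) ->
    (forall k, exists x, forall i, (i < k)%N -> F i x) ->
    exists x, forall i, F i x.

(* Topology: R^n carries the product topology of the topology of R.   *)

Definition relopen (T : topologicalType) (X U : set T) : Prop :=
  exists V, open V /\ U = X `&` V.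

Definition homeo (T U : topologicalType) (X : set T) (Y : set U)
  (f : T -> U) : Prop :=
  f @` X = Y /\ {within X, continuous f} /\
  exists g : U -> T, (forall a, X a -> g (f a) = a) /\ {within Y, continuous g}.

Section HGS.
Variable R : topologicalType.
Variable M : fo_structure R.

Definition HGS_closure_ax : Prop :=
  forall (n : nat) (A : set R) (X : set ('I_n -> R)) (a : 'I_n -> R),
    definable M A X -> closure (closure X `\` X) a ->
    (dimt M A a < dimS M X)%N.

Definition HGS_generic_ax : Prop :=
  forall (n : nat) (A B : set R) (X : set ('I_n -> R)) (a : 'I_n -> R),
    countable A -> definable M A X -> generic M A X a ->
    countable B -> A `<=` B ->
    forall U : set ('I_n -> R), open U -> U a ->
      exists a', U a' /\ generic M B X a'.

Definition HGS_homeo_ax : Prop :=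
  forall (n m : nat) (A : set R) (X : set ('I_n -> R)) (Y : set ('I_m -> R))
    (Z : set ('I_(n + m) -> R)),
    definable M A X -> definable M A Y -> definable M A Z ->
    Z `<=` prodS X Y ->
    dimS M X = dimS M Y -> dimS M Y = dimS M Z ->
    (forall a, finite_set [set b | Z (catt a b)]) ->
    (forall b, finite_set [set a | Z (catt a b)]) ->
    forall a b, generic M A Z (catt a b) ->
      exists (U : set ('I_n -> R)) (V : set ('I_m -> R))
             (f : ('I_n -> R) -> ('I_m -> R)),
        [/\ open U /\ U a, open V /\ V b,
            homeo (X `&` U) (Y `&` V) f &
            Z `&` prodS U V = graph (X `&` U) f].

Definition hausdorff_geometric : Prop :=
  [/\ hausdorff_space R, geometric M /\ aleph1_saturated M,
      HGS_closure_ax, HGS_generic_ax & HGS_homeo_ax].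

Definition t_minimal : Prop :=
  hausdorff_geometric /\
  (exists (m : nat) (B : set ('I_(1 + m) -> R)),
     definable M set0 B /\
     (forall b : 'I_m -> R, open [set r | B (catt (pt1 r) b)]) /\
     (forall (U : set R) (r : R), open U -> U r ->
        exists b : 'I_m -> R, B (catt (pt1 r) b) /\
                              [set r' | B (catt (pt1 r') b)] `<=` U)) /\
  (forall r : R, ~ open [set r]).

Definition lore (S : forall n : nat, set (set ('I_n -> R))) : Prop :=
  (forall n X, S n X -> definable M setT X) /\
  S 1%N setT /\ S 2%N [set x | x ord0 = x ord_max] /\
  (forall n m (X : set ('I_n -> R)) (Y : set ('I_m -> R)),
     S n X -> S m Y -> S (n + m)%N (prodS X Y)) /\
  (forall n (X Y : set ('I_n -> R)), S n X -> S n Y -> S n (X `&` Y)) /\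
  (forall n (s : {perm 'I_n}) (X : set ('I_n -> R)),
     S n X -> S n [set x | X (fun i => x (s i))]) /\
  (forall n m (X : set ('I_n -> R)) (Y : set ('I_m -> R))
     (f : ('I_n -> R) -> ('I_m -> R)),
     S n X -> S (n + m)%N (graph X f) -> homeo X Y f -> S m Y) /\
  (forall n (X U : set ('I_n -> R)),
     S n X -> definable M setT U -> relopen X U -> S n U) /\
  (forall n (X : set ('I_n -> R)), definable M setT X ->
     (forall x, X x -> exists U, relopen X U /\ U x /\ S n U) -> S n X) /\
  (forall n (A : set R) (X : set ('I_n -> R)), definable M A X -> X !=set0 ->
     exists X', [/\ definable M A X', S n X', relopen X X' &
                    (X `\` X' = set0 \/ (dimS M (X `\` X') < dimS M X)%N)]).

Definition lman_point (S : forall n : nat, set (set ('I_n -> R))) (n : nat)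
  (X : set ('I_n -> R)) (x : 'I_n -> R) : Prop :=
  X x /\
  exists (U : set ('I_n -> R)) (W : set ('I_(dimS M X) -> R))
         (f : ('I_n -> R) -> ('I_(dimS M X) -> R)),
    [/\ definable M setT U, relopen X U /\ U x, open W,
        homeo U W f & S (n + dimS M X)%N (graph U f)].

End HGS.

From mathcomp Require Import all_boot all_order fingroup perm.
From mathcomp Require Import boolp classical_sets cardinality topology function_spaces.
From mathcomp Require Import zify.
From Stdlib Require Import Lia.
Import ArrowAsProduct.

Set Implicit Arguments.
Unset Strict Implicit.
Unset Printing Implicit Defensive.
Local Open Scope classical_set_scope.

(* Let d = dim X and choose d coordinates J of x that are independent over A;
   pi is the projection onto them. Every other coordinate of x is algebraic
   over A and x_J, and eliminating the infinity quantifier turns this into an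
   A-definable X0 <= X containing x on which pi is finite-to-one. The graph Z
   of pi on X0 has the generic point (x, pi x) and finite-to-one projections,
   so the homeomorphism axiom makes pi a homeomorphism from X0 near x onto an
   open subset of R^d. Near the generic point x, X agrees with X0 by the
   closure axiom, and Z is loric by axiom (iv) of the lore. Cutting down to a
   definable box around x (t-minimality) gives the loric chart. *)

Section FirstOrderPredicates.
Variables (R : Type) (M : fo_structure R).
Local Notation form := (formula (@fo_ar R M)).
Local Notation feq := (@FEq _ (@fo_ar R M)).

Fixpoint var_bound (phi : form) : nat :=
  match phi with
  | FRel s v => \max_(k < fo_ar s) (v k).+1
  | FEq i j => (maxn i j).+1
  | FNot p => var_bound p
  | FAnd p q => maxn (var_bound p) (var_bound q)
  | FEx i p => maxn i.+1 (var_bound p)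
  end.

Lemma eq_sat (phi : form) (e e' : nat -> R) :
  (forall v, v < var_bound phi -> e v = e' v) -> sat M e phi <-> sat M e' phi.
Proof.
elim: phi e e' => [s v|i j|p IH|p IHp q IHq|i p IH] e e' /= ee'.
- suff -> : (fun k => e (v k)) = (fun k => e' (v k)) by [].
  apply: funext => k; apply: ee'; exact: (@leq_bigmax _ (fun k => (v k).+1) k).
- by rewrite !ee' // ltnS ?leq_maxl ?leq_maxr.
- by rewrite (IH e e').
- rewrite (IHp e e') ?(IHq e e') // => w hw; apply: ee';
  by apply: leq_trans hw _; rewrite ?leq_maxl ?leq_maxr.
- have eq_upd r : sat M (upd e i r) p <-> sat M (upd e' i r) p.
    apply: IH => w hw; rewrite /upd; case: eqP => // _; apply: ee'.
    exact: leq_trans hw (leq_maxr _ _).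
  by split=> -[r /eq_upd hr]; exists r.
Qed.

Fixpoint rename (sg : nat -> nat) (phi : form) : form :=
  match phi with
  | FRel s v => @FRel _ _ s (fun k => sg (v k))
  | FEq i j => feq (sg i) (sg j)
  | FNot p => FNot (rename sg p)
  | FAnd p q => FAnd (rename sg p) (rename sg q)
  | FEx i p => FEx (sg i) (rename sg p)
  end.

Lemma sat_rename (sg : nat -> nat) (phi : form) (e : nat -> R) :
  injective sg -> sat M e (rename sg phi) <-> sat M (e \o sg) phi.
Proof.
move=> sg_inj; elim: phi e => [s v|i j|p IH|p IHp q IHq|i p IH] e //=.
- by rewrite IH.
- by rewrite IHp IHq.
- have upd_comp r : upd e (sg i) r \o sg = upd (e \o sg) i r.
    by apply: funext => w; rewrite /upd /= inj_eq.
  by split=> -[r hr]; exists r; move: hr; rewrite IH upd_comp.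
Qed.

Definition fforalls (l : seq nat) (phi : form) : form :=
  foldr (fun v p => FNot (FEx v (FNot p))) phi l.
Definition fexists (l : seq nat) (phi : form) : form := foldr (@FEx _ _) phi l.
Definition fbigand (l : seq form) : form := foldr (@FAnd _ _) (feq 0 0) l.

Lemma sat_fforalls l phi e : sat M e (fforalls l phi) <->
  forall e', (forall v, v \notin l -> e' v = e v) -> sat M e' phi.
Proof.
elim: l e => [|v l IH] e /=.
  split; last by apply.
  by move=> h e' he; suff -> : e' = e by []; apply: funext => w; exact: he.
split.
- move=> h e' he; apply: contrapT => ne; apply: h; exists (e' v).
  rewrite IH => h2; apply: ne; apply: h2 => w hw; rewrite /upd; case: eqP => [->//|nw].
  by apply: he; rewrite inE negb_or hw andbT; apply/eqP.
- move=> h [r]; apply; rewrite IH => e' he; apply: h => w.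
  rewrite inE negb_or => /andP[/eqP nw hw]; rewrite he // /upd; by case: eqP.
Qed.

Lemma sat_fexists l phi e : sat M e (fexists l phi) <->
  exists e', (forall v, v \notin l -> e' v = e v) /\ sat M e' phi.
Proof.
elim: l e => [|v l IH] e /=.
  split; first by exists e.
  by move=> [e' [he h]]; suff <- : e' = e by []; apply: funext => w; exact: he.
split.
- move=> [r]; rewrite IH => -[e' [he h]]; exists e'; split=> // w.
  rewrite inE negb_or => /andP[/eqP nw hw]; rewrite he // /upd; by case: eqP.
- move=> [e' [he h]]; exists (e' v); rewrite IH; exists e'; split=> // w hw.
  rewrite /upd; case: eqP => [->//|nw].
  by apply: he; rewrite inE negb_or hw andbT; apply/eqP.
Qed.

Lemma sat_fbigand (f : nat -> form) (l : seq nat) e :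
  sat M e (fbigand [seq f i | i <- l]) <-> forall i, i \in l -> sat M e (f i).
Proof.
elim: l => [|p l IH] /=; first by split.
rewrite IH; split.
- by move=> [h1 h2] q; rewrite inE => /orP[/eqP->//|]; exact: h2.
- move=> h; split; first by apply: h; rewrite inE eqxx.
  by move=> q hq; apply: h; rewrite inE hq orbT.
Qed.

Definition fo_pred (P : (nat -> R) -> Prop) :=
  exists phi : form, forall e, P e <-> sat M e phi.

Lemma eq_fo_pred P Q : (forall e, P e <-> Q e) -> fo_pred P -> fo_pred Q.
Proof. by move=> PQ [phi hphi]; exists phi => e; rewrite -PQ. Qed.

Lemma fo_pred_eq i j : fo_pred (fun e => e i = e j).
Proof. by exists (feq i j). Qed.

Lemma fo_predN P : fo_pred P -> fo_pred (fun e => ~ P e).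
Proof. by move=> [phi hphi]; exists (FNot phi) => e /=; rewrite hphi. Qed.

Lemma fo_predI P Q : fo_pred P -> fo_pred Q -> fo_pred (fun e => P e /\ Q e).
Proof. by move=> [p hp] [q hq]; exists (FAnd p q) => e /=; rewrite hp hq. Qed.

(* The variables [v < var_bound phi] are moved to fresh positions [W + v],
   which are then forced to equal the [sg v] and existentially closed. *)
Lemma fo_pred_comp P (sg : nat -> nat) : fo_pred P -> fo_pred (fun e => P (e \o sg)).
Proof.
move=> [phi hphi]; set K := var_bound phi.
set W := K + \max_(i < K) (sg i).+1.
have sgW i : i < K -> sg i < W.
  move=> iK; apply: (@leq_trans (\max_(i < K) (sg i).+1)); last exact: leq_addl.
  exact: (@leq_bigmax _ (fun i : 'I_K => (sg i).+1) (Ordinal iK)).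
exists (fexists (iota W K) (FAnd (fbigand [seq feq (W + i) (sg i) | i <- iota 0 K])
                                (rename (addn W) phi))) => e.
rewrite sat_fexists; split.
- move=> h; pose e' v := if W <= v < W + K then e (sg (v - W)) else e v.
  exists e'; split; first by move=> v; rewrite mem_iota /e' => /negbTE ->.
  split.
    apply/sat_fbigand => i; rewrite mem_iota add0n => /andP[_ iK] /=.
    rewrite /e' leq_addr ltn_add2l iK addKn /=.
    by have := sgW _ iK; rewrite ltnNge => /negbTE ->.
  apply/sat_rename; first exact: addnI.
  rewrite -(eq_sat (e := e \o sg)) -?hphi // => v vK /=.
  by rewrite /e' leq_addr ltn_add2l vK addKn.
- move=> [e' [he [/sat_fbigand hq /sat_rename]]] => /(_ (@addnI W)) hs.
  rewrite hphi -(eq_sat (e := e' \o addn W)) // => v vK /=.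
  have := hq v; rewrite mem_iota add0n vK => /(_ isT) /= ->.
  by apply: he; rewrite mem_iota leqNgt sgW.
Qed.

Lemma fo_pred_forall_above P L : fo_pred P ->
  fo_pred (fun e => forall e', (forall v, v < L -> e' v = e v) -> P e').
Proof.
move=> [phi hphi]; set K := var_bound phi.
exists (fforalls (iota L (K - L)) phi) => e; rewrite sat_fforalls; split.
- move=> h e' he; rewrite -hphi; apply: h => v vL; apply: he.
  by rewrite mem_iota leqNgt vL.
- move=> h e' he; pose e'' v := if v < K then e' v else e v.
  have : sat M e'' phi.
    apply: h => v; rewrite mem_iota => hv; rewrite /e''; case: ifP => // vK.
    apply: he; move: hv; case: (leqP L v) => //= Lv.
    by rewrite subnKC ?vK // ltnW // (leq_ltn_trans Lv).
  by rewrite hphi (eq_sat (e' := e')) // => v vK; rewrite /e'' vK.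
Qed.

Lemma fo_pred_exists_above P L : fo_pred P ->
  fo_pred (fun e => exists e', (forall v, v < L -> e' v = e v) /\ P e').
Proof.
move=> hP; apply: eq_fo_pred (fo_predN (fo_pred_forall_above L (fo_predN hP))) => e.
split; last by move=> [e' [he pe]] h2; exact: h2 he pe.
move=> nh; apply: contrapT => ne; apply: nh => e' he pe; apply: ne; by exists e'.
Qed.

End FirstOrderPredicates.

Lemma cattL (T : Type) n m (a : 'I_n -> T) (b : 'I_m -> T) i :
  catt a b (lshift m i) = a i.
Proof. by rewrite /catt (unsplitK (inl i)). Qed.

Lemma cattR (T : Type) n m (a : 'I_n -> T) (b : 'I_m -> T) j :
  catt a b (rshift n j) = b j.
Proof. by rewrite /catt (unsplitK (inr j)). Qed.

Lemma catt_inj (T : Type) n m (a a' : 'I_n -> T) (b b' : 'I_m -> T) :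
  catt a b = catt a' b' -> a = a' /\ b = b'.
Proof.
move=> E; split; apply: funext => i; first by rewrite -(cattL a b) E cattL.
by rewrite -(cattR a b) E cattR.
Qed.

Lemma catt_eta (T : Type) n m (z : 'I_(n + m) -> T) :
  z = catt (fun i => z (lshift m i)) (fun j => z (rshift n j)).
Proof.
by apply: funext => u; rewrite /catt; case: splitP => [i|j] hu; congr z; apply: val_inj.
Qed.

Lemma below_split k m v : v < k + m ->
  (exists i : 'I_k, v = i) \/ (exists j : 'I_m, v = k + j).
Proof.
move=> vkm; case: (ltnP v k) => vk; first by left; exists (Ordinal vk).
have vkm' : v - k < m by rewrite ltn_subLR.
by right; exists (Ordinal vkm'); rewrite /= subnKC.
Qed.

Definition subst_coords (R : Type) n m (c : 'I_m -> 'I_n + R) (y : 'I_n -> R)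
  : 'I_m -> R :=
  fun t => match c t with inl j => y j | inr a => a end.

Section DefinableSets.
Variables (R : Type) (M : fo_structure R).

Definition agree k m (x : 'I_k -> R) (p : 'I_m -> R) (e : nat -> R) :=
  (forall i : 'I_k, e i = x i) /\ (forall j : 'I_m, e (k + j) = p j).

Definition depends_below L (P : (nat -> R) -> Prop) :=
  forall e e', (forall v, v < L -> e v = e' v) -> P e -> P e'.

(* A normal form of [definable] that is easier to combine: membership is
   tested on any assignment that agrees with the point and the parameters. *)
Definition definable_pred (A : set R) k (X : set ('I_k -> R)) :=
  exists m (p : 'I_m -> R) (P : (nat -> R) -> Prop),
    [/\ fo_pred M P, depends_below (k + m) P, (forall j, A (p j)) &
        forall x e, agree x p e -> (X x <-> P e)].

Definition mkenv (r0 : R) k m (x : 'I_k -> R) (p : 'I_m -> R) (v : nat) : R :=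
  match (insub v : option 'I_k) with
  | Some i => x i
  | None => if (insub (v - k) : option 'I_m) is Some j then p j else r0
  end.

Lemma agree_mkenv r0 k m (x : 'I_k -> R) (p : 'I_m -> R) : agree x p (mkenv r0 x p).
Proof.
split=> [i|j]; rewrite /mkenv.
  by case: insubP => [i' _ hi|]; [congr x; apply: val_inj | rewrite ltn_ord].
case: insubP => [i' hi _|_]; first by move: hi; rewrite ltnNge leq_addr.
rewrite addKn; case: insubP => [j' _ hj|]; last by rewrite ltn_ord.
by congr p; apply: val_inj.
Qed.

Lemma agree_cattE k m (y : 'I_k -> R) (q : 'I_m -> R) (e : nat -> R) :
  (forall u : 'I_(k + m), e u = catt y q u) <-> agree y q e.
Proof.
split.
- move=> ey; split=> [i|j]; first by have := ey (lshift m i); rewrite cattL.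
  by have := ey (rshift k j); rewrite cattR.
- by move=> [h1 h2] u; rewrite /catt; case: splitP => [a ->|t ->]; [exact: h1|exact: h2].
Qed.

Lemma agree_ext k m (x : 'I_k -> R) (p : 'I_m -> R) e e' :
  agree x p e -> (forall v, v < k + m -> e v = e' v) -> agree x p e'.
Proof.
move=> [h1 h2] ee'; split=> [i|j]; first by rewrite -h1 ee' // ltn_addr.
by rewrite -h2 ee' // ltn_add2l.
Qed.

Lemma agree_below k m (x : 'I_k -> R) (p : 'I_m -> R) e e' :
  agree x p e -> agree x p e' -> forall v, v < k + m -> e v = e' v.
Proof.
move=> [h1 h2] [h1' h2'] v /below_split [[i ->]|[j ->]]; first by rewrite h1 h1'.
by rewrite h2 h2'.
Qed.

(* [r0] only fills the variables beyond the point and the parameters, but it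
   is needed: for empty [R] every subset of [R^0] is a [definable_pred]. *)
Lemma definableE (r0 : R) A k (X : set ('I_k -> R)) :
  definable M A X = definable_pred A X.
Proof.
apply/propext; split.
- move=> [phi [m [p [pA ->]]]].
  exists m, p, (fun e => forall e', (forall v, v < k + m -> e' v = e v) -> sat M e' phi).
  split => //.
  + by apply: fo_pred_forall_above; exists phi.
  + by move=> e e' ee' he e'' e''e; apply: he => v hv; rewrite e''e // ee'.
  + move=> x e hag; split => [h e' e'e|h e' h1 h2].
      by have [h1 h2] := agree_ext hag (fun v hv => esym (e'e v hv)); exact: h.
    by apply: h => v hv; apply: (agree_below (conj h1 h2) hag).
- move=> [m [p [P [[phi hphi] _ pA spec]]]].
  exists phi, m, p; split => //; apply/funext => x; apply/propext; split.
  + by move=> Xx e h1 h2; rewrite -hphi -(spec x e).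
  + move=> h; rewrite (spec x (mkenv r0 x p)); last exact: agree_mkenv.
    by rewrite hphi; case: (agree_mkenv r0 x p) => h1 h2; exact: h.
Qed.

Lemma definable_small A k (X : set ('I_k -> R)) : definable M A X ->
  exists A0, [/\ countable A0, A0 `<=` A & definable M A0 X].
Proof.
move=> [phi [m [p [pA ->]]]]; exists (range p); split.
- exact/finite_set_countable/finite_image/finite_finset.
- by move=> _ [j _ <-]; exact: pA.
- by exists phi, m, p; split => // j; exists j.
Qed.

Lemma definable_mono A B k (X : set ('I_k -> R)) : A `<=` B ->
  definable M A X -> definable M B X.
Proof. by move=> AB [phi [m [p [pA ->]]]]; exists phi, m, p; split => // j; apply: AB. Qed.

Lemma definableT A k : definable M A [set: 'I_k -> R].
Proof.
exists (@FEq _ (@fo_ar R M) 0 0), 0, (tnth [tuple]); split; first by case.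
by apply/seteqP; split.
Qed.

Variable r0 : R.

Lemma definableC A k (X : set ('I_k -> R)) : definable M A X -> definable M A (~` X).
Proof.
rewrite !(definableE r0) => -[m [p [P [hP locP pA spec]]]].
exists m, p, (fun e => ~ P e); split => //; first exact: fo_predN.
- by move=> e e' ee' nPe Pe'; apply: nPe; apply: (locP e') => // v hv; rewrite ee'.
- by move=> x e hag /=; rewrite (spec x e hag).
Qed.

Lemma definableI A k (X Y : set ('I_k -> R)) :
  definable M A X -> definable M A Y -> definable M A (X `&` Y).
Proof.
rewrite !(definableE r0).
move=> [m1 [p1 [P1 [f1 l1 a1 s1]]]] [m2 [p2 [P2 [f2 l2 a2 s2]]]].
pose sg v := if v < k then v else v + m1.
exists (m1 + m2), (catt p1 p2), (fun e => P1 e /\ P2 (e \o sg)); split.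
- by apply: fo_predI => //; exact: fo_pred_comp.
- move=> e e' ee' [hp1 hp2]; split.
    by apply: (l1 e) => // v hv; apply: ee'; rewrite addnA ltn_addr.
  apply: (l2 (e \o sg)) => // v hv; apply: ee'; rewrite /sg; case: ifP => vk.
    exact: leq_trans vk (leq_addr _ _).
  by rewrite addnCA (addnC v) ltn_add2l.
- by move=> j; rewrite /catt; case: split => [a|b]; [apply: a1|apply: a2].
- move=> x e [he1 he2]; rewrite /setI /= (s1 x e) ?(s2 x (e \o sg)) //.
    split => [i|j]; rewrite /= /sg /=; first by rewrite ltn_ord he1.
    rewrite ltnNge leq_addr /= -addnA (addnC j).
    by have := he2 (rshift m1 j); rewrite /= cattR.
  by split => // j; have := he2 (lshift m2 j); rewrite /= cattL.
Qed.

Lemma definableD A k (X Y : set ('I_k -> R)) :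
  definable M A X -> definable M A Y -> definable M A (X `\` Y).
Proof. by move=> dX /definableC; exact: definableI. Qed.

Lemma definable_diag A k (i j : 'I_k) : definable M A [set y | y i = y j].
Proof.
rewrite (definableE r0).
exists 0, (tnth [tuple]), (fun e => e i = e j); split => //; first exact: fo_pred_eq.
- by move=> e e' ee'; rewrite !ee' // ltn_addr.
- by case.
- by move=> x e [ex _] /=; rewrite !ex.
Qed.

Lemma definable_preimage A k l m (X : set ('I_k -> R)) (h : 'I_k -> 'I_(l + m))
  (q : 'I_m -> R) : (forall t, A (q t)) -> definable M A X ->
  definable M A [set y | X (fun i => catt y q (h i))].
Proof.
rewrite !(definableE r0) => qA [m' [p [P [f1 l1 a1 s1]]]].
pose sg v := if (insub v : option 'I_k) is Some i then nat_of_ord (h i)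
             else v - k + (l + m).
have sgi (i : 'I_k) : sg i = h i.
  rewrite /sg; case: insubP => [i' _ hi|]; last by rewrite ltn_ord.
  by congr (nat_of_ord (h _)); apply: val_inj.
have sgj (j : 'I_m') : sg (k + j) = j + (l + m).
  rewrite /sg; case: insubP => [i' hi _|_]; last by rewrite addKn.
  by move: hi; rewrite ltnNge leq_addr.
exists (m + m'), (catt q p), (fun e => P (e \o sg)); split.
- exact: fo_pred_comp.
- move=> e e' ee'; apply: l1 => v /below_split [[i ->]|[j ->]] /=; apply: ee'.
    by rewrite sgi addnA (leq_trans (ltn_ord (h i))) // leq_addr.
  by rewrite sgj; have := ltn_ord j; lia.
- by move=> j; rewrite /catt; case: split => [a|b]; [apply: qA|apply: a1].
- move=> y e [he1 he2]; rewrite /= (s1 _ (e \o sg)) //; split => [i|j] /=.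
    rewrite sgi; apply/agree_cattE: (h i); split=> // t.
    by have := he2 (lshift m' t); rewrite cattL.
  rewrite sgj (_ : j + (l + m) = l + (m + j)); last by lia.
  by have := he2 (rshift m j); rewrite cattR.
Qed.

Lemma definable_subst A k l (X : set ('I_k -> R)) (c : 'I_k -> 'I_l + R) :
  (forall i a, c i = inr a -> A a) -> definable M A X ->
  definable M A [set y | X (subst_coords c y)].
Proof.
move=> cA dX; have [[a0 Aa0]|noA] := pselect (exists a, A a).
- pose q i := if c i is inr a then a else a0.
  pose h i := if c i is inl j then lshift k j else rshift l i.
  have qA t : A (q t) by rewrite /q; case E: (c t) => [//|a]; exact: cA E.
  suff -> : [set y | X (subst_coords c y)] = [set y | X (fun i => catt y q (h i))].
    exact: definable_preimage.
  apply: eq_set => y; congr X; apply: funext => i.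
  by rewrite /h /q /subst_coords; case E: (c i) => [j|a]; rewrite ?cattL ?cattR ?E.
- have c_inl i : exists j, c i = inl j.
    case E: (c i) => [j|a]; first by exists j.
    by case: noA; exists a; exact: cA E.
  have [g cg] := choice c_inl.
  suff -> : [set y | X (subst_coords c y)] =
            [set y | X (fun i => catt y (tnth [tuple]) (lshift 0 (g i)))].
    by apply: definable_preimage => //; case.
  by apply: eq_set => y; congr X; apply: funext => i; rewrite /subst_coords cg cattL.
Qed.

Lemma definable_bigcap A k (I : finType) (X : I -> set ('I_k -> R)) :
  (forall t, definable M A (X t)) -> definable M A [set y | forall t, X t y].
Proof.
move=> dX; suff /(_ (enum I)) : forall s : seq I,
    definable M A [set y | forall t, t \in s -> X t y].
  by congr definable; apply: eq_set => y; apply/propext; split=> h t *;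
     apply: h; rewrite ?mem_enum.
elim => [|t s IH].
  by congr definable: (definableT A k); apply: eq_set => y; apply/propext.
congr definable: (definableI (dX t) IH); apply: eq_set => y; apply/propext; split.
  by move=> [h1 h2] u; rewrite inE => /orP[/eqP->//|]; exact: h2.
by move=> h; split=> [|u hu]; apply: h; rewrite inE ?eqxx // hu orbT.
Qed.

(* The witness [w] is read off the variables just after the parameters. *)
Lemma definable_proj A k N (X : set ('I_(k + N) -> R)) : definable M A X ->
  definable M A [set y | exists w : 'I_N -> R, X (catt y w)].
Proof.
rewrite !(definableE r0) => -[m [p [P [f1 l1 a1 s1]]]].
pose tau v := if v < k then v else if v < k + N then v + m else v - N.
exists m, p, (fun e => exists e', (forall v, v < k + m -> e' v = e v) /\ P (e' \o tau)).
split => //.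
- exact/fo_pred_exists_above/fo_pred_comp.
- by move=> e e' ee' [e'' [e''e h]]; exists e''; split => // v hv; rewrite e''e // ee'.
- move=> y e [he1 he2].
  have hag e' (w : 'I_N -> R) : (forall v, v < k + m -> e' v = e v) ->
      (forall s : 'I_N, e' (k + m + s) = w s) -> agree (catt y w) p (e' \o tau).
    move=> e'e e'w; split => [u|j] /=.
    + rewrite /catt /tau; case: splitP => [i ->|s ->]; first by rewrite e'e ?he1 // ltn_addr.
      by rewrite ifT; [rewrite -e'w; congr e'; lia | have := ltn_ord s; lia].
    + rewrite /tau ifF; last by lia.
      rewrite ifF; last by lia.
      by rewrite (_ : k + N + j - N = k + j) ?e'e ?he2 ?ltn_add2l //; lia.
  split.
  + move=> [w Xw].
    pose e' v := if v < k + m then e v else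
                 if (insub (v - (k + m)) : option 'I_N) is Some s then w s else r0.
    exists e'; split; first by move=> v hv; rewrite /e' hv.
    rewrite -(s1 _ _ (hag e' w _ _)) // => [v hv|s]; first by rewrite /e' hv.
    rewrite /e' ifF; last by lia.
    rewrite addKn; case: insubP => [s' _ hs'|]; last by rewrite ltn_ord.
    by congr w; apply: val_inj.
  + move=> [e' [e'e Pe']]; exists (fun s => e' (k + m + s)).
    by rewrite (s1 _ _ (hag e' _ e'e (fun _ => erefl))).
Qed.

End DefinableSets.

Lemma bigmax_attained (I : finType) (P : pred I) (F : I -> nat) i0 : P i0 ->
  exists i, P i /\ \max_(j | P j) F j = F i.
Proof.
move=> Pi0; have [|i Pi E] := @eq_bigmax_cond _ P F; last by exists i.
by apply/card_gt0P; exists i0.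
Qed.

Lemma countableU (T : Type) (A B : set T) :
  countable A -> countable B -> countable (A `|` B).
Proof.
move=> cA cB; suff -> : A `|` B = \bigcup_(i in [set: bool]) (if i then A else B).
  by apply: bigcup_countable => // -[].
apply/seteqP; split => [r [Ar|Br]|r [[] _ h]]; by [exists true|exists false|left|right].
Qed.

Section AlgebraicClosureDimension.
Variables (R : Type) (M : fo_structure R).

Lemma acl_subset A B b : A `<=` B -> acl M A b -> acl M B b.
Proof. by move=> AB [Y [dY [fY Yb]]]; exists Y; split => //; exact: definable_mono dY. Qed.

Lemma acl_self A b : A b -> acl M A b.
Proof.
move=> Ab; exists [set pt1 b]; split; last by split; [exact: finite_set1|].
pose c (i : 'I_2) : 'I_1 + R := if i == ord0 then inl ord0 else inr b.
have cA i a : c i = inr a -> A a by rewrite /c; case: ifP => // _ [<-].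
suff -> : [set pt1 b] = [set y | subst_coords c y ord0 = subst_coords c y ord_max].
  exact: definable_subst cA (definable_diag M b A ord0 ord_max).
apply/seteqP; split => [_ -> //|y /= yb].
by apply: funext => i; rewrite (ord1 i).
Qed.

Lemma acl_indep_subset A B k (a : 'I_k -> R) J :
  A `<=` B -> acl_indep M B a J -> acl_indep M A a J.
Proof.
move=> AB indep i iJ /(acl_subset _) aclA; apply: (indep i iJ); apply: aclA.
by move=> r [Ar|Sr]; [left; exact: AB|right].
Qed.

Lemma acl_indep_inj A k (a : 'I_k -> R) J i i' : acl_indep M A a J ->
  i \in J -> i' \in J -> a i = a i' -> i = i'.
Proof.
move=> indep iJ i'J E; apply: contrapT => ne; apply: (indep i iJ); apply: acl_self.
right; exists i'; last by rewrite E.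
by rewrite /= !inE i'J andbT; apply/eqP => e; apply: ne.
Qed.

Lemma acl_indep_reindex A k l (a : 'I_k -> R) (b : 'I_l -> R) (rho : 'I_k -> 'I_l)
    (J : {set 'I_k}) :
  (forall i, i \in J -> a i = b (rho i)) -> {in J &, injective rho} ->
  acl_indep M A a J -> acl_indep M A b (rho @: J) /\ #|rho @: J| = #|J|.
Proof.
move=> ab rho_inj indep; split; last exact: card_in_imset.
move=> i' /imsetP [i iJ ->]; rewrite -ab // => /(acl_subset _) acl_b.
apply: (indep i iJ); apply: acl_b => r [Ar|[j' /= hj' <-]]; first by left.
right; move: hj'; rewrite !inE => /andP [ne /imsetP [j jJ E]]; subst j'.
exists j; last by rewrite ab.
by rewrite /= !inE jJ andbT; apply/eqP => E; move: ne; rewrite E eqxx.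
Qed.

Lemma dimt_ge A k (a : 'I_k -> R) J : acl_indep M A a J -> #|J| <= dimt M A a.
Proof.
move=> indep; apply: (leq_bigmax_cond (P := fun J => `[< acl_indep M A a J >])).
exact/asboolP.
Qed.

Lemma dimt_witness A k (a : 'I_k -> R) :
  exists J, acl_indep M A a J /\ #|J| = dimt M A a.
Proof.
have indep0 : `[< acl_indep M A a finset.set0 >] by apply/asboolP => i; rewrite inE.
have [J [/asboolP indep E]] :=
  bigmax_attained (P := fun J => `[< acl_indep M A a J >]) (fun J => #|J|) indep0.
by exists J; split => //; rewrite /dimt E.
Qed.

Lemma dimt_le A k (a : 'I_k -> R) : dimt M A a <= k.
Proof. by apply/bigmax_leqP => J _; rewrite (leq_trans (max_card _)) // card_ord. Qed.

Lemma dimt_subset A B k (a : 'I_k -> R) : A `<=` B -> dimt M B a <= dimt M A a.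
Proof.
move=> AB; apply/bigmax_leqP => J /asboolP indep.
exact/dimt_ge/(acl_indep_subset AB).
Qed.

(* A maximum-size independent set is maximal, hence spans by exchange. *)
Lemma acl_max_indep A k (a : 'I_k -> R) J i : acl_exchange M ->
  acl_indep M A a J -> #|J| = dimt M A a -> i \notin J ->
  acl M (A `|` [set a j | j in [set j | j \in J]]) (a i).
Proof.
move=> exch indep cardJ iJ; apply: contrapT => nacl.
suff /dimt_ge : acl_indep M A a (i |: J) by rewrite cardsU1 iJ cardJ ltnn.
move=> t; rewrite !inE => /orP [/eqP ->|tJ].
  move=> /(acl_subset _) acl_i; apply/nacl/acl_i => r [Ar|[j /= hj <-]]; first by left.
  right; exists j => //; move: hj; rewrite /= !inE => /andP[ji /orP[/eqP eji|//]].
  by move: ji; rewrite eji eqxx.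
have ti : t != i by apply: contra iJ => /eqP <-.
pose A' := A `|` [set a j | j in [set j | j \in J :\ t]].
have nacl_t : ~ acl M A' (a t) by exact: indep.
move=> acl_t; have acl_ti : acl M (A' `|` [set a i]) (a t).
  apply: acl_subset acl_t => r [Ar|[j /= hj <-]]; first by left; left.
  move: hj; rewrite !inE => /andP [jt /orP[/eqP ->|jJ]]; first by right.
  by left; right; exists j => //=; rewrite !inE jt jJ.
apply/nacl/(acl_subset _ (exch _ _ _ acl_ti nacl_t)).
move=> r [[Ar|[j /= hj <-]]|->]; first by left.
  by right; exists j => //; move: hj; rewrite /= !inE => /andP[].
by right; exists t.
Qed.

End AlgebraicClosureDimension.

Section SetDimension.
Variables (R : topologicalType) (M : fo_structure R).

Lemma dimS_ge B k (Y : set ('I_k -> R)) y : countable B -> definable M B Y -> Y y ->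
  dimt M B y <= dimS M Y.
Proof.
move=> cB dY Yy; have lt_k1 : dimt M B y < k.+1 by rewrite ltnS dimt_le.
apply: (@leq_bigmax_cond _ (fun i : 'I_k.+1 => `[< exists B, countable B /\
  definable M B Y /\ exists a, Y a /\ dimt M B a = i >]) (fun i => nat_of_ord i)
  (Ordinal lt_k1)).
by apply/asboolP; exists B; split => //; split => //; exists y.
Qed.

Lemma dimS_le k (Y : set ('I_k -> R)) : dimS M Y <= k.
Proof. by apply/bigmax_leqP => i _; rewrite -ltnS ltn_ord. Qed.

Lemma dimS_witness k (Y : set ('I_k -> R)) : 0 < dimS M Y ->
  exists B, [/\ countable B, definable M B Y & exists a, Y a /\ dimt M B a = dimS M Y].
Proof.
rewrite /dimS; set P := (fun i : 'I_k.+1 => `[< exists B, countable B /\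
  definable M B Y /\ exists a, Y a /\ dimt M B a = i >]).
have [[i0 Pi0]|noP] := pselect (exists i, P i).
  have [i [/asboolP [B [cB [dB [a [Ya Ea]]]]] E]] := bigmax_attained val Pi0.
  by move=> _; exists B; split => //; exists a; rewrite Ea E.
by rewrite big_pred0 // => i; apply/negP => Pi; apply: noP; exists i.
Qed.

Lemma dimt_le_dimS A k (Y : set ('I_k -> R)) y : definable M A Y -> Y y ->
  dimt M A y <= dimS M Y.
Proof.
move=> /definable_small [A0 [cA0 A0A dA0]] Yy.
exact: leq_trans (dimt_subset M y A0A) (dimS_ge cA0 dA0 Yy).
Qed.

Hypothesis generic_ax : HGS_generic_ax M.

(* The generic axiom with [U = setT] moves a generic point over [B] to one
   over [B `|` C]. *)
Lemma generic_over_countable C k (Y : set ('I_k -> R)) y0 :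
  countable C -> definable M C Y -> Y y0 -> exists y, generic M C Y y.
Proof.
move=> cC dY Yy0; case: (posnP (dimS M Y)) => [E|pos].
  by exists y0; split => //; apply/eqP; rewrite E -leqn0 -E dimS_ge.
have [B [cB dB [a [Ya Ea]]]] := dimS_witness pos.
have [a' [_ [Ya' Ea']]] := generic_ax cB dB (conj Ya Ea) (countableU cB cC)
   (fun r (h : B r) => or_introl h) openT (I : setT a).
exists a'; split => //; apply/eqP; rewrite eqn_leq dimS_ge //= -Ea'.
by apply: (dimt_subset M) => r h; right.
Qed.

Lemma dimS_mono C k (X Y : set ('I_k -> R)) : countable C -> definable M C X ->
  Y `<=` X -> dimS M Y <= dimS M X.
Proof.
move=> cC dX YX; case: (posnP (dimS M Y)) => [->//|pos].
have [B [cB dB [a [Ya Ea]]]] := dimS_witness pos.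
have [a' [_ [Ya' <-]]] := generic_ax cB dB (conj Ya Ea) (countableU cB cC)
   (fun r (h : B r) => or_introl h) openT (I : setT a).
by apply: dimS_ge (countableU cB cC) _ (YX _ Ya'); apply: definable_mono dX => r; right.
Qed.

End SetDimension.

Section ProductTopology.
Variable R : topologicalType.

Lemma box_nbhs n (x : 'I_n -> R) (O : set ('I_n -> R)) : nbhs x O ->
  exists Oc : 'I_n -> set R, (forall i, open (Oc i) /\ Oc i (x i)) /\
     [set y | forall i, Oc i (y i)] `<=` O.
Proof.
pose F : set_system ('I_n -> R) := [set O | exists Oc : 'I_n -> set R,
   (forall i, open (Oc i) /\ Oc i (x i)) /\ [set y | forall i, Oc i (y i)] `<=` O].
have FF : Filter F.
  split.
  - by exists (fun _ => setT); split => // i; split => //; exact: openT.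
  - move=> P Q [Oc [hO sub]] [Oc' [hO' sub']]; exists (fun i => Oc i `&` Oc' i); split.
      move=> i; have [oOc Ocx] := hO i; have [oOc' Oc'x] := hO' i.
      by split; [exact: openI|].
    by move=> y hy; split; [apply: sub | apply: sub'] => i; case: (hy i).
  - by move=> P Q PQ [Oc [hO sub]]; exists Oc; split => // y /sub /PQ.
suff /(_ O) : F --> (x : product_topology_def (fun _ : 'I_n => R)) by apply.
apply/cvg_sup => i.
have surj : (fun f : 'I_n -> R => f i) @` setT = setT.
  by apply/seteqP; split => // r _; exists (fun _ => r).
apply/(cvg_image _ FF surj) => N /=; rewrite nbhsE => -[B [oB Bx] BN].
exists [set y | N (y i)].
  exists (fun j => if j == i then B else setT); split.
    by move=> j; case: eqP => [->|_] //; split => //; exact: openT.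
  by move=> y /(_ i); rewrite eqxx => /BN.
by apply/seteqP; split => [_ [y hy <-] //|r Nr]; exists (fun _ => r).
Qed.

Lemma continuous_into_prod (T : topologicalType) k (g : T -> ('I_k -> R)) :
  (forall i, continuous (fun t => g t i)) -> continuous g.
Proof.
move=> gi t O /box_nbhs [Oc [hO sub]].
suff : \forall s \near t, forall i, Oc i (g s i) by apply: filterS => s /sub.
apply: filter_forall => i; apply: (gi i t); apply: open_nbhs_nbhs; exact: hO.
Qed.

Lemma reindex_continuous k l (h : 'I_k -> 'I_l) :
  continuous (fun y : 'I_l -> R => y \o h).
Proof.
by apply: continuous_into_prod => i; exact: (@proj_continuous _ (fun _ : 'I_l => R)).
Qed.

Lemma box_open k (Oc : 'I_k -> set R) : (forall i, open (Oc i)) ->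
  open [set y : 'I_k -> R | forall i, Oc i (y i)].
Proof.
move=> oOc; rewrite openE => y Ocy; rewrite /interior.
apply: (@filter_forall _ _ (fun i (z : 'I_k -> R) => Oc i (z i)) (nbhs y)) => i.
apply: (@proj_continuous _ (fun _ : 'I_k => R) i y); apply: open_nbhs_nbhs.
by split; [exact: oOc|exact: Ocy].
Qed.

End ProductTopology.
Arguments reindex_continuous {R k l} h.

Lemma homeo_restrict (T U : topologicalType) (D : set T) (E : set U) (f : T -> U)
    (B : set T) :
  open E -> open B -> homeo D E f ->
  open (f @` (D `&` B)) /\ homeo (D `&` B) (f @` (D `&` B)) f.
Proof.
move=> oE oB [fDE [fcont [g [gf gcont]]]].
have imgE : f @` (D `&` B) = E `&` g @^-1` B.
  apply/seteqP; split => [_ [a [Da Ba] <-]|w [Ew Bgw]].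
    by split; [rewrite -fDE; exists a | rewrite /= gf].
  have [a Da faw] : (f @` D) w by rewrite fDE.
  by exists a; first by split; rewrite // -(gf a Da) faw.
split.
  rewrite imgE; apply: (continuous_inP g oE).1 => //.
  by rewrite -continuous_open_subspace.
split=> //; split; first exact: continuous_subspaceW fcont.
exists g; split=> [a [Da _]|]; first exact: gf.
by apply: continuous_subspaceW gcont; rewrite imgE => w [].
Qed.

Definition definable_basis (R : topologicalType) (M : fo_structure R) m
    (B : set ('I_(1 + m) -> R)) :=
  definable M set0 B /\
  (forall b : 'I_m -> R, open [set r | B (catt (pt1 r) b)]) /\
  (forall (U : set R) (r : R), open U -> U r ->
     exists b : 'I_m -> R, B (catt (pt1 r) b) /\ [set r' | B (catt (pt1 r') b)] `<=` U).

Lemma definable_open_box (R : topologicalType) (M : fo_structure R) (r0 : R) m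
    (B : set ('I_(1 + m) -> R)) n (x : 'I_n -> R) (O : set ('I_n -> R)) :
  definable_basis M B -> nbhs x O ->
  exists Box, [/\ definable M setT Box, open Box, Box x & Box `<=` O].
Proof.
move=> [dB [oB basisB]] /box_nbhs [Oc [hOc subO]].
have [bc hbc] := choice (fun i => basisB _ _ (hOc i).1 (hOc i).2).
exists [set y | forall i, B (catt (pt1 (y i)) (bc i))]; split.
- apply: (definable_bigcap r0 (X := fun i y => B (catt (pt1 (y i)) (bc i)))) => i.
  pose c (u : 'I_(1 + m)) : 'I_n + R :=
    if split u is inr t then inr (bc i t) else inl i.
  suff -> : (fun y : 'I_n -> R => B (catt (pt1 (y i)) (bc i))) =
            [set y | B (subst_coords c y)].
    by apply: (definable_subst r0 (c := c)) => //; exact: definable_mono (sub0set _) dB.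
  apply: eq_set => y; congr B; apply: funext => u.
  by rewrite /c /catt /subst_coords; case: (split u).
- exact: box_open (fun i => oB (bc i)).
- by move=> i; exact: (hbc i).1.
- by move=> y By; apply: subO => i; exact: (hbc i).2 _ (By i).
Qed.

Section FiniteFibres.
Variables (R : topologicalType) (M : fo_structure R) (r0 : R).

Lemma definable_family A k (Y : set ('I_k -> R)) : definable M A Y ->
  exists m (p : 'I_m -> R) (Yf : set ('I_(k + m) -> R)),
    [/\ definable M set0 Yf, forall j, A (p j) & forall y, Y y <-> Yf (catt y p)].
Proof.
move=> [phi [m [p [pA ->]]]].
exists m, p, [set z : 'I_(k + m) -> R |
  forall e : nat -> R, (forall u : 'I_(k + m), e u = z u) -> sat M e phi].
split => //.
- exists phi, 0, (tnth [tuple]); split; first by case.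
  by apply/seteqP; split=> z /= h e ez; [move=> _; exact: h | apply: h => //; case].
- move=> y; split=> h e; first by move=> /agree_cattE []; exact: h.
  by move=> ey ep; apply: h; apply/agree_cattE.
Qed.

Lemma definable_fibre A n m (Y : set ('I_(1 + m) -> R)) (c : 'I_m -> 'I_n + R)
    (i : 'I_n) :
  (forall t a, c t = inr a -> A a) -> definable M A Y ->
  definable M A [set y | Y (catt (pt1 (y i)) (subst_coords c y))].
Proof.
move=> cA dY.
pose c' (u : 'I_(1 + m)) : 'I_n + R := if split u is inr t then c t else inl i.
suff -> : [set y | Y (catt (pt1 (y i)) (subst_coords c y))] = [set y | Y (subst_coords c' y)].
  apply: (definable_subst r0 (c := c')) dY => u a.
  by rewrite /c'; case: (split u) => // t; exact: cA.
apply: eq_set => y; congr Y; apply: funext => u.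
by rewrite /c' /catt /subst_coords; case: (split u).
Qed.

(* [y ++ f ++ r] encodes a candidate enumeration [f] and a point [r] of the
   fibre missed by it. *)
Lemma definable_fibre_covered A n m N (Y : set ('I_(1 + m) -> R))
    (c : 'I_m -> 'I_n + R) :
  (forall t a, c t = inr a -> A a) -> definable M A Y ->
  definable M A [set y | exists f : 'I_N -> R,
    forall r, Y (catt (pt1 r) (subst_coords c y)) -> exists t, f t = r].
Proof.
move=> cA dY; pose lst : 'I_(n + N + 1) := rshift (n + N) ord0.
pose c' (u : 'I_(1 + m)) : 'I_(n + N + 1) + R :=
  match split u with
  | inl _ => inl lst
  | inr t => match c t with inl j => inl (lshift 1 (lshift N j)) | inr a => inr a end
  end.
have c'A u a : c' u = inr a -> A a.
  rewrite /c'; case: (split u) => // t; case E: (c t) => [//|a'] [aa].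
  by rewrite -aa; exact: cA E.
have c'E y w r : subst_coords c' (catt (catt y w) (pt1 r)) = catt (pt1 r) (subst_coords c y).
  apply: funext => u; rewrite /subst_coords /c' /catt; case: (split u) => [u0|t].
    by rewrite (unsplitK (inr ord0)).
  by case: (c t) => [j|a] //; rewrite (unsplitK (inl (lshift N j))) (unsplitK (inl j)).
pose avoid := [set z : 'I_(n + N + 1) -> R |
  forall t : 'I_N, (~` [set z | z (lshift 1 (rshift n t)) = z lst]) z].
pose bad := [set yw : 'I_(n + N) -> R | exists r : 'I_1 -> R,
  ([set z | Y (subst_coords c' z)] `&` avoid) (catt yw r)].
have d_bad : definable M A bad.
  apply/(definable_proj r0)/(definableI r0); first exact: definable_subst c'A dY.
  apply: (definable_bigcap r0 (X := fun t : 'I_N =>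
    ~` [set z : 'I_(n + N + 1) -> R | z (lshift 1 (rshift n t)) = z lst])) => t.
  exact/(definableC r0)/definable_diag.
suff -> : [set y | exists f : 'I_N -> R,
    forall r, Y (catt (pt1 r) (subst_coords c y)) -> exists t, f t = r] =
  [set y | exists w : 'I_N -> R, (~` bad) (catt y w)].
  exact/(definable_proj r0)/(definableC r0).
have avoidE y w r : avoid (catt (catt y w) (pt1 r)) <-> forall t, w t <> r.
  by rewrite /avoid /= /lst; split=> h t; have := h t; rewrite cattR !cattL cattR.
apply: eq_set => y; apply/propext; split => -[w hw]; exists w.
- move=> [r]; rewrite (_ : r = pt1 (r ord0)); last by apply: funext => j; rewrite (ord1 j).
  by move=> [/= + /avoidE wr]; rewrite c'E => /hw [t]; exact: wr.
- move=> r Yr; apply: contrapT => nr; apply: hw; exists (pt1 r); split.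
    by rewrite /= c'E.
  by apply/avoidE => t wtr; apply: nr; exists t.
Qed.

Lemma finite_box n (S : 'I_n -> set R) :
  (forall i, finite_set (S i)) -> finite_set [set a : 'I_n -> R | forall i, S i (a i)].
Proof.
move=> finS; have /finite_seqP [s Es] : finite_set (\bigcup_(i in [set: 'I_n]) S i).
  by apply: bigcup_finite => // *; exact: finite_finset.
pose g (c : {ffun 'I_n -> 'I_(size s)}) i := nth r0 s (c i).
apply: sub_finite_set (finite_image g (@finite_finset _ [set: {ffun 'I_n -> 'I_(size s)}])).
move=> a Sa; have a_s i : a i \in s.
  have : (\bigcup_(i in [set: 'I_n]) S i) (a i) by exists i.
  by rewrite Es.
have idx i : index (a i) s < size s by rewrite index_mem.
by exists [ffun i => Ordinal (idx i)] => //; apply: funext => i; rewrite /g ffunE nth_index.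
Qed.

Hypotheses (exch : acl_exchange M) (elim : elim_exists_infty M).
Variables (n d : nat) (A : set R) (x : 'I_n -> R) (J : {set 'I_n}) (jj : 'I_d -> 'I_n).
Hypotheses (indepJ : acl_indep M A x J) (cardJ : #|J| = dimt M A x).
Hypothesis jj_onto : forall j, j \in J -> exists k, jj k = j.

(* Each coordinate of [x] is algebraic over [A] and the coordinates in [J];
   eliminating the infinity quantifier makes the bound on the number of
   conjugates uniform, hence valid on a definable set containing [x]. *)
Lemma coord_finite_on_fibres (i : 'I_n) : exists D : set ('I_n -> R),
  [/\ definable M A D, D x &
      forall b, exists S : set R, finite_set S /\
        forall a, D a -> a \o jj = b -> S (a i)].
Proof.
case: (boolP (i \in J)) => iJ.
  exists setT; split => //; first exact: definableT.
  move=> b; have [k <-] := jj_onto iJ; exists [set b k]; split; first exact: finite_set1.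
  by move=> a _ <-.
have [Y [dY [finY Yxi]]] := acl_max_indep exch indepJ cardJ iJ.
have [m [p [Yf [dYf pA YE]]]] := definable_family dY.
have [N coverN] := elim (definable_mono (sub0set _) dYf).
have c_ex t : exists s : 'I_n + R,
    match s with inl j => j \in J /\ x j = p t | inr a => A a /\ a = p t end.
  by case: (pA t) => [Ap|[j /= jJ xj]]; [exists (inr (p t)) | exists (inl j)].
have [c cP] := choice c_ex.
have cA t a : c t = inr a -> A a by move: (cP t) => + ct; rewrite ct => -[].
have cx : subst_coords c x = p.
  by apply: funext => t; move: (cP t); rewrite /subst_coords; case: (c t) => [j|a] [_ ->].
have c_proj a a' : a \o jj = a' \o jj -> subst_coords c a = subst_coords c a'.
  move=> aa'; apply: funext => t; move: (cP t); rewrite /subst_coords.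
  by case: (c t) => // j [/jj_onto [k <-] _]; exact: (congr1 (@^~ k) aa').
pose covered y := exists f : 'I_N -> R,
  forall r, Yf (catt (pt1 r) (subst_coords c y)) -> exists t, f t = r.
exists ([set y | Yf (catt (pt1 (y i)) (subst_coords c y))] `&` covered); split.
- apply: (definableI r0); first exact: definable_fibre cA (definable_mono (sub0set _) dYf).
  exact: definable_fibre_covered cA (definable_mono (sub0set _) dYf).
- split; rewrite /= ?/covered cx; first by rewrite -YE.
  have fin : finite_set [set r | Yf (catt (pt1 r) p)].
    by apply: sub_finite_set (finite_image (@^~ ord0) finY) => r /YE Yr; exists (pt1 r).
  by have [f fr] := coverN p fin; exists f => r /fr [t _ <-]; exists t.
- move=> b; have [[a0 [[_ [f hf]] a0b]]|noa] :=
    pselect (exists a0, ([set y | Yf (catt (pt1 (y i)) (subst_coords c y))] `&` covered) a0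
                        /\ a0 \o jj = b).
    exists (range f); split; first exact/finite_image/finite_finset.
    move=> a [/= Ya _] ab; move: Ya; rewrite (c_proj a a0) ?ab ?a0b //.
    by move=> /hf [t <-]; exists t.
  by exists set0; split => // a Da ab; apply: noa; exists a.
Qed.

Lemma finite_to_one_proj_subset (X : set ('I_n -> R)) : definable M A X -> X x ->
  exists X0 : set ('I_n -> R), [/\ definable M A X0, X0 `<=` X, X0 x &
    forall b, finite_set [set a | X0 a /\ a \o jj = b]].
Proof.
move=> dX Xx; have [D hD] := choice coord_finite_on_fibres.
exists (X `&` [set a | forall i, D i a]); split.
- apply: (definableI r0) dX _; apply: (definable_bigcap r0 (X := D)) => i.
  by case: (hD i).
- by move=> a [].
- by split => // i; case: (hD i).
- move=> b; have fibre_i i : exists S : set R, finite_set S /\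
      forall a, D i a -> a \o jj = b -> S (a i) by case: (hD i) => _ _; apply.
  have [S finS] := choice fibre_i.
  apply: sub_finite_set (finite_box (fun i => (finS i).1)).
  by move=> a [[Xa Da] ab] i; apply: (finS i).2.
Qed.

End FiniteFibres.

Lemma enum_set_onto n (J : {set 'I_n}) d : #|J| = d ->
  exists jj : 'I_d -> 'I_n, forall j, j \in J -> exists k, jj k = j.
Proof.
move=> cardJ; exists (fun k => enum_val (cast_ord (esym cardJ) k)) => j jJ.
by exists (cast_ord cardJ (enum_rank_in jJ j)); rewrite cast_ordK enum_rankK_in.
Qed.

Definition graph_index n d (h : 'I_d -> 'I_n) (u : 'I_(n + d)) : 'I_n :=
  match split u with inl i => i | inr k => h k end.

Lemma catt_comp (T : Type) n d (a : 'I_n -> T) (h : 'I_d -> 'I_n) :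
  catt a (a \o h) = a \o graph_index h.
Proof. by apply: funext => u; rewrite /catt /graph_index /=; case: (split u). Qed.

Section GraphDimension.
Variables (R : topologicalType) (M : fo_structure R).

Lemma dimt_catt_ge A n m (a : 'I_n -> R) (b : 'I_m -> R) :
  dimt M A a <= dimt M A (catt a b).
Proof.
have [J [indepJ <-]] := dimt_witness M A a.
by have [/dimt_ge + <-] := acl_indep_reindex (b := catt a b) (rho := lshift m)
  (fun i _ => esym (cattL _ _ i)) (fun i i' _ _ => @lshift_inj n m i i') indepJ.
Qed.

Lemma dimt_catt_comp A n d (a : 'I_n -> R) (h : 'I_d -> 'I_n) :
  dimt M A (catt a (a \o h)) = dimt M A a.
Proof.
apply/eqP; rewrite eqn_leq dimt_catt_ge andbT.
have [J [indepJ <-]] := dimt_witness M A (catt a (a \o h)).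
have a_gi u : catt a (a \o h) u = a (graph_index h u) by rewrite catt_comp.
have gi_inj : {in J &, injective (graph_index h)}.
  by move=> u u' uJ u'J E; apply: (acl_indep_inj indepJ uJ u'J); rewrite !a_gi E.
by have [/dimt_ge + <-] := acl_indep_reindex (fun u _ => a_gi u) gi_inj indepJ.
Qed.

Lemma dimt_comp_ge A n d (a : 'I_n -> R) (J : {set 'I_n}) (jj : 'I_d -> 'I_n) :
  acl_indep M A a J -> (forall j, j \in J -> exists k, jj k = j) ->
  #|J| <= dimt M A (a \o jj).
Proof.
move=> indepJ jj_onto; case: (posnP d) => [d0|dpos].
  suff /eqP -> : #|J| == 0 by [].
  rewrite cards_eq0; apply/eqP/setP => j; rewrite inE.
  by apply/negP => /jj_onto [k _]; have := ltn_ord k; rewrite {2}d0.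
pose rho j := odflt (Ordinal dpos) [pick k | jj k == j].
have rhoK j : j \in J -> jj (rho j) = j.
  move=> jJ; rewrite /rho; case: pickP => [k /eqP //|none].
  by have [k jjk] := jj_onto _ jJ; move: (none k); rewrite jjk eqxx.
have rho_inj : {in J &, injective rho}.
  by move=> j j' jJ j'J E; rewrite -(rhoK j jJ) -(rhoK j' j'J) E.
by have [/dimt_ge + <-] := acl_indep_reindex (b := a \o jj)
  (fun j jJ => esym (f_equal a (rhoK j jJ))) rho_inj indepJ.
Qed.

Variable r0 : R.

Lemma definable_graph_comp A n d (X : set ('I_n -> R)) (h : 'I_d -> 'I_n) :
  definable M A X -> definable M A (graph X (fun a => a \o h)).
Proof.
move=> dX.
have dXl : definable M A [set z : 'I_(n + d) -> R | X (fun i => z (lshift d i))].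
  exact: (definable_subst r0 (c := fun i => inl (lshift d i))) dX.
pose diag k (z : 'I_(n + d) -> R) := z (rshift n k) = z (lshift d (h k)).
have dXr : definable M A [set z | forall k, diag k z].
  by apply: (definable_bigcap r0 (X := diag)) => k; exact: definable_diag.
congr definable: (definableI r0 dXl dXr); apply/seteqP; split.
- move=> z [/= Xz zr]; exists (fun i => z (lshift d i)); split => //.
  by rewrite {1}(catt_eta z); congr catt; apply: funext => k; exact: zr.
- move=> _ [a [Xa ->]]; split => /= [|k]; last by rewrite /diag cattR cattL.
  by congr X: Xa; apply: funext => i; rewrite cattL.
Qed.

Hypothesis generic_ax : HGS_generic_ax M.

Lemma dimS_graph_comp C n d (X : set ('I_n -> R)) (h : 'I_d -> 'I_n) a0 :
  countable C -> definable M C X -> X a0 ->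
  dimS M (graph X (fun a => a \o h)) = dimS M X.
Proof.
move=> cC dX Xa0; have dG := definable_graph_comp h dX.
apply/eqP; rewrite eqn_leq; apply/andP; split.
  have [_ [[a [Xa ->]] <-]] := generic_over_countable generic_ax cC dG
    (ex_intro _ a0 (conj Xa0 erefl) : graph X _ (catt a0 (a0 \o h))).
  by rewrite dimt_catt_comp dimS_ge.
have [a [Xa <-]] := generic_over_countable generic_ax cC dX Xa0.
by rewrite -(dimt_catt_comp _ _ h) dimS_ge //; exists a.
Qed.

End GraphDimension.

Section Lores.
Variables (R : topologicalType) (M : fo_structure R).
Variable S : forall n : nat, set (set ('I_n -> R)).
Arguments S : clear implicits.
Hypothesis loreS : lore M S.

Lemma loric_relopen n (X U : set ('I_n -> R)) :
  S n X -> definable M setT U -> relopen X U -> S n U.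
Proof. by case: loreS => _ [_ [_ [_ [_ [_ [_ [openS _]]]]]]]; exact: openS. Qed.

Lemma loric_large_subset n A (X : set ('I_n -> R)) : definable M A X -> X !=set0 ->
  exists X', [/\ definable M A X', S n X', relopen X X' &
                 (X `\` X' = set0 \/ (dimS M (X `\` X') < dimS M X)%N)].
Proof. by case: loreS => _ [_ [_ [_ [_ [_ [_ [_ [_ largeS]]]]]]]]; exact: largeS. Qed.

Lemma generic_loric_part (r0 : R) n A (Z : set ('I_n -> R)) z :
  definable M A Z -> generic M A Z z ->
  exists Z', [/\ S n Z', relopen Z Z', definable M A Z' & Z' z].
Proof.
move=> dZ [Zz dimz].
have [Z' [dZ' SZ' relZ' small]] := loric_large_subset dZ (ex_intro _ z Zz).
exists Z'; split => //; apply: contrapT => nZ'z.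
have Dz : (Z `\` Z') z by [].
case: small => [D0|]; first by rewrite D0 in Dz.
have := dimt_le_dimS (definableD r0 dZ dZ') Dz.
by rewrite dimz => /leq_ltn_trans /[apply]; rewrite ltnn.
Qed.

End Lores.

(* A point of the closure of [Y] outside [Y] lies in its frontier, whose points
   have dimension below [dimS Y] by the closure axiom. *)
Lemma generic_nbhs_notin (R : topologicalType) (M : fo_structure R) A n
    (Y : set ('I_n -> R)) (x : 'I_n -> R) :
  HGS_closure_ax M -> definable M A Y -> ~ Y x -> (dimS M Y <= dimt M A x)%N ->
  nbhs x (~` Y).
Proof.
move=> closure_ax dY nYx dimY; apply: contrapT => nnbhs.
have clY : closure Y x.
  move=> B Bx; apply: contrapT => noYB; apply: nnbhs; apply: filterS Bx => a Ba Ya.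
  by apply: noYB; exists a.
have := closure_ax n A Y x dY (subset_closure (conj clY nYx)).
by move=> /leq_trans /(_ dimY); rewrite ltnn.
Qed.

Section GenericChart.
Variables (R : topologicalType) (M : fo_structure R) (r0 : R).
Variable S : forall n : nat, set (set ('I_n -> R)).
Arguments S : clear implicits.
Hypotheses (closure_ax : HGS_closure_ax M) (generic_ax : HGS_generic_ax M).
Hypotheses (homeo_ax : HGS_homeo_ax M) (loreS : lore M S).
Variables (mB : nat) (B : set ('I_(1 + mB) -> R)).
Hypothesis basisB : definable_basis M B.
Variables (n : nat) (A : set R) (X : set ('I_n -> R)) (x : 'I_n -> R).
Hypotheses (dX : definable M A X) (genx : generic M A X x).
Local Notation d := (dimS M X).
Variables (jj : 'I_d -> 'I_n) (X0 : set ('I_n -> R)).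
Hypotheses (dX0 : definable M A X0) (X0X : X0 `<=` X) (X0x : X0 x).
Hypothesis finite_fibres : forall b, finite_set [set a | X0 a /\ a \o jj = b].
Hypothesis dim_proj : (d <= dimt M A (x \o jj))%N.

Local Notation pi := (fun a : 'I_n -> R => a \o jj).
Local Notation Z := (graph X0 pi).

Lemma dimS_X0 : dimS M X0 = d.
Proof.
have [A0 [cA0 _ dXA0]] := definable_small dX.
apply/eqP; rewrite eqn_leq (dimS_mono generic_ax cA0 dXA0 X0X) -{1}genx.2.
exact: dimt_le_dimS dX0 X0x.
Qed.

Lemma generic_graph : generic M A Z (catt x (pi x)).
Proof.
have [A1 [cA1 _ dXA1]] := definable_small dX0.
split; first by exists x.
rewrite dimt_catt_comp genx.2 (dimS_graph_comp r0 generic_ax _ cA1 dXA1 X0x).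
by rewrite dimS_X0.
Qed.

Lemma proj_local_homeo :
  exists U V, [/\ open U, U x, open V & homeo (X0 `&` U) V pi].
Proof.
have dimT : dimS M [set: 'I_d -> R] = d.
  apply/eqP; rewrite eqn_leq dimS_le /=.
  exact: leq_trans dim_proj (dimt_le_dimS (definableT M A d) I).
have dimZ : dimS M Z = d.
  have [A1 [cA1 _ dXA1]] := definable_small dX0.
  by rewrite (dimS_graph_comp r0 generic_ax _ cA1 dXA1 X0x) dimS_X0.
have Zsub : Z `<=` prodS X0 [set: 'I_d -> R] by move=> _ [a [X0a ->]]; exists a, (pi a).
have fin_r a : finite_set [set b | Z (catt a b)].
  by apply: sub_finite_set (finite_set1 (pi a)) => b [a' [_ /catt_inj [-> ->]]].
have fin_l b : finite_set [set a | Z (catt a b)].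
  by apply: sub_finite_set (finite_fibres b) => a [a' [X0a' /catt_inj [-> ->]]].
have [U [V [f [[oU Ux] [oV _] f_homeo f_graph]]]] :=
  homeo_ax dX0 (definableT M A d) (definable_graph_comp r0 jj dX0) Zsub
    (etrans dimS_X0 (esym dimT)) (etrans dimT (esym dimZ)) fin_r fin_l generic_graph.
have f_pi a : (X0 `&` U) a -> f a = pi a.
  move=> X0Ua; have : graph (X0 `&` U) f (catt a (f a)) by exists a.
  by rewrite -f_graph => -[[a' [_ /catt_inj [<- ->]]] _].
exists U, V; split => //; move: f_homeo; rewrite setTI => -[fimg [_ [g [gf gcont]]]].
split; first by rewrite -fimg; apply: eq_imagel => a /f_pi.
split; first exact/continuous_subspaceT/reindex_continuous.
by exists g; split => // a X0Ua; rewrite -f_pi ?gf.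
Qed.


Lemma X_sub_X0_near : nbhs x (~` (X `\` X0)).
Proof.
apply: generic_nbhs_notin closure_ax (definableD r0 dX dX0) _ _; first by case.
have [A0 [cA0 _ dXA0]] := definable_small dX.
by rewrite genx.2; apply: (dimS_mono generic_ax cA0 dXA0) => a [].
Qed.

Lemma lman_point_generic : lman_point M S X x.
Proof.
have [U [V [oU Ux oV pi_homeo]]] := proj_local_homeo.
have [Z' [SZ' [O' [oO' Z'E]] dZ' O'x]] :=
  generic_loric_part loreS r0 (definable_graph_comp r0 jj dX0) generic_graph.
have nbhsO : nbhs x (U `&` ~` (X `\` X0) `&` [set a : 'I_n -> R | O' (catt a (pi a))]).
  apply: filterI; first by apply: filterI X_sub_X0_near; exact: open_nbhs_nbhs.
  rewrite (_ : [set a : 'I_n -> R | _] = (fun a : 'I_n -> R => a \o graph_index jj) @^-1` O').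
    apply: reindex_continuous; apply: open_nbhs_nbhs; split => //.
    by move: O'x; rewrite Z'E catt_comp => -[].
  by apply: eq_set => a; rewrite catt_comp.
have [Box [dBox oBox Boxx BoxO]] := definable_open_box r0 basisB nbhsO.
have XBoxE : X `&` Box = X0 `&` U `&` Box.
  apply/seteqP; split => [a [Xa Ba]|a [[X0a _] Ba]]; last by split => //; exact: X0X.
  have [[Ua XX0a] _] := BoxO a Ba.
  by split => //; split => //; apply: contrapT => nX0a; apply: XX0a.
have [oW W_homeo] := homeo_restrict oV oBox pi_homeo.
pose Q := [set z : 'I_(n + d) -> R | Box (fun i => z (lshift d i))].
have graphE : graph (X `&` Box) pi = Z' `&` Q.
  have lshiftK a : (fun i => catt a (pi a) (lshift d i)) = a.
    by apply: funext => i; rewrite cattL.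
  rewrite Z'E; apply/seteqP; split => [_ [a [XBa ->]]|_ [[[a [X0a ->]] _] Qa]].
    move: (XBa); rewrite XBoxE => -[[X0a _] Ba]; have [_ O'a] := BoxO a XBa.2.
    by split; [split => //; exists a | rewrite /Q /= lshiftK].
  by exists a; split => //; split; [exact: X0X | move: Qa; rewrite /Q /= lshiftK].
split; first exact: genx.1.
exists (X `&` Box), (pi @` (X `&` Box)), pi; split.
- exact: (definableI r0 (definable_mono (subsetT _) dX) dBox).
- by split; [exists Box | split; first exact: genx.1].
- by rewrite XBoxE.
- by rewrite XBoxE.
- rewrite graphE; apply: (loric_relopen loreS SZ'); last first.
    by exists Q; split => //; exact: (continuousP _).1 (reindex_continuous (lshift d)) _ oBox.
  apply: (definableI r0 (definable_mono (subsetT _) dZ')).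
  exact: (definable_subst r0 (c := fun i => inl (lshift d i))) dBox.
Qed.

End GenericChart.

Lemma lman_point_dim0 (R : topologicalType) (M : fo_structure R)
    (S : forall n : nat, set (set ('I_n -> R))) A (X : set ('I_0 -> R)) x :
  lore M S -> definable M A X -> X x -> lman_point M S X x.
Proof.
move=> loreS dX Xx; split => //.
have all_eq (a b : 'I_0 -> R) : a = b by apply: funext; case.
move: (dimS M X) (dimS_le M X); case=> [_|//].
pose f (_ : 'I_0 -> R) := tnth [tuple] : 'I_0 -> R.
exists X, setT, f; split => //.
- exact: definable_mono (subsetT _) dX.
- by split => //; exists setT; rewrite setIT; split => //; exact: openT.
- exact: openT.
- split; first by apply/seteqP; split => // w _; exists x.
  split; first exact/continuous_subspaceT/cst_continuous.
  exists (fun _ => x); split => [a _|]; first exact: all_eq.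
  exact/continuous_subspaceT/cst_continuous.
- have [X' [_ SX' [V [oV X'E]] large]] :=
    loric_large_subset loreS (definableT M A (0 + 0)) (ex_intro _ (tnth [tuple]) I).
  subst X'.
  suff -> : graph X f = [set: 'I_(0 + 0) -> R] `&` V by [].
  case: large => [noD|]; last by move=> /leq_trans/(_ (dimS_le M _)); rewrite ltn0.
  apply/seteqP; split => [z _|z _]; last by exists x; split; rewrite ?all_eq.
  by apply: contrapT => nVz; have : (setT `\` (setT `&` V)) z by []; rewrite noD.
Qed.

Theorem lemma2p17 (R : topologicalType) (M : fo_structure R)
  (S : forall n : nat, set (set ('I_n -> R)))
  (HM : t_minimal M) (HS : lore M S)
  (n : nat) (A : set R) (X : set ('I_n -> R)) (x : 'I_n -> R)
  (HX : definable M A X) (Hx : generic M A X x) :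
  lman_point M S X x.
Proof.
have [n0|npos] := posnP n; first by subst n; exact: lman_point_dim0 HS HX Hx.1.
have r0 : R := x (Ordinal npos).
case: HM => -[_ [[exch elim] _] closure_ax generic_ax homeo_ax] [[mB [B basisB]] _].
have [J [indepJ cardJ]] := dimt_witness M A x.
have [jj jj_onto] := enum_set_onto (etrans cardJ Hx.2).
have [X0 [dX0 X0X X0x fibres]] :=
  finite_to_one_proj_subset r0 exch elim indepJ cardJ jj_onto HX Hx.1.
have dim_proj := dimt_comp_ge indepJ jj_onto.
rewrite cardJ Hx.2 in dim_proj.
exact: (lman_point_generic r0 closure_ax generic_ax homeo_ax HS basisB HX Hx dX0 X0X X0x
  fibres dim_proj).
Qed.
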